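(* Let $d\ge 2$. For every unimodular lattice $\mathcal L\subset\mathbb R^d$, every $\vec\alpha\in\mathbb R^d$ and every $N\in\mathbb N$, $$g_N(\vec\alpha,\mathcal L)\le \begin{cases}5 & \text{if } d=2,\\ \sigma_d+1 & \text{if } d\ge 3,\end{cases}$$ where $\sigma_d$ is the kissing number of $\mathbb R^d$.
   Context: A unimodular lattice $\mathcal L\subset\mathbb R^d$ is a lattice of covolume $1$. For $\vec\alpha\in\mathbb R^d$ and $1\le n\le N$, the Kronecker points are $\xi_n=n\vec\alpha+\mathcal L\in\mathbb R^d/\mathcal L$. The nearest neighbour distance of $\xi_n$ is $\delta_{n,N}=\min\{|(m-n)\vec\alpha+\vec\ell|>0 : 1\le m\le N,\ \vec\ell\in\mathcal L\}$, where $|\cdot|$ is the Euclidean norm, and $g_N(\vec\alpha,\mathcal L)=|\{\delta_{n,N}:1\le n\le N\}|$ is the number of distinct nearest neighbour distances. The kissing number $\sigma_d$ is the maximal number of non-overlapping unit balls in $\mathbb R^d$ that can all touch a fixed unit ball. *)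

From mathcomp Require Import all_boot all_order all_algebra all_classical all_reals.
Set Implicit Arguments. Unset Strict Implicit. Unset Printing Implicit Defensive.
Import Order.TTheory GRing.Theory Num.Theory.
Local Open Scope ring_scope.
Local Open Scope classical_set_scope.

Definition eucl_norm (R : realType) (d : nat) (v : 'rV[R]_d) : R :=
  Num.sqrt (\sum_(i < d) v ord0 i ^+ 2).

Definition lattice_of (R : realType) (d : nat) (B : 'M[R]_d) : set 'rV[R]_d :=
  [set v | exists z : 'I_d -> int, v = \sum_(i < d) (z i)%:~R *: row i B].

Definition unimodular_basis (R : realType) (d : nat) (B : 'M[R]_d) : Prop :=
  `|\det B| = 1.

(* delta_{n,N} = min { |(m-n) alpha + l| > 0 : 1 <= m <= N, l in L }
   (the minimum exists; we write it as the infimum of the set). *)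
Definition nn_dist (R : realType) (d : nat) (L : set 'rV[R]_d)
  (alpha : 'rV[R]_d) (N n : nat) : R :=
  inf [set r : R | exists (m : nat) (l : 'rV[R]_d),
        [/\ (1 <= m <= N)%N, L l,
            r = eucl_norm ((m%:R - n%:R) *: alpha + l) & 0 < r]].

Definition gN (R : realType) (d : nat) (L : set 'rV[R]_d)
  (alpha : 'rV[R]_d) (N : nat) : nat :=
  size (undup [seq nn_dist L alpha N n | n <- iota 1 N]).

(* A kissing configuration of k unit balls around the unit ball at 0:
   centres at distance 2 from 0, pairwise non-overlapping (distance >= 2). *)
Definition kissing_config (R : realType) (d k : nat) : Prop :=
  exists x : 'I_k -> 'rV[R]_d,
    (forall i, eucl_norm (x i) = 2) /\
    (forall i j, i != j -> 2 <= eucl_norm (x i - x j)).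

Definition is_kissing_number (R : realType) (d sigma : nat) : Prop :=
  kissing_config R d sigma /\ (forall k, kissing_config R d k -> (k <= sigma)%N).

(* For 1 <= n <= N, delta_{n,N} is the length min_disp t of the shortest nonzero vector
   j alpha + l (0 <= j <= t, l in L) with t = max(n-1, N-n), and t ranges over
   [N/2, N-1].  Since min_disp is nonincreasing, every distance other than min_disp (N/2)
   is the value right after a drop of min_disp at some k in (N/2, N-1], and such a drop
   is witnessed by a vector V_k = k alpha + l shorter than all earlier ones.  For drops
   k < k', V_k' - V_k has the same form with j <= N/2, so it is longer than V_k and V_k':
   the V's pairwise make angles above pi/3, and rescaled to length 2 they form a kissing
   configuration.  In the plane, V_k'' - V_k' + V_k has the same form with |j| < k'', so
   it is longer than V_k''.  Measuring angles from the shortest V, four further vectors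
   would lie in (pi/3, 5 pi/3), pairwise more than pi/3 apart, so two of them would be
   more than pi apart, which an explicit inequality in coordinates rules out. *)

From mathcomp Require Import all_boot all_order all_algebra all_classical all_reals.
From mathcomp Require Import ring lra zify trigo.
Set Implicit Arguments. Unset Strict Implicit. Unset Printing Implicit Defensive.
Import Order.TTheory GRing.Theory Num.Theory.
Local Open Scope ring_scope.

Lemma path_gap_spread (R : realDomainType) (e x : R) (s : seq R) :
  path (fun a b => a + e < b) x s -> s != [::] -> e *+ size s < last x s - x.
Proof.
elim: s x => // y s IHs x /= /andP [xy ys] _.
case: s IHs ys => [|z s] IHs ys; first by rewrite /= mulr1n; lra.
by have IH := IHs y ys isT; rewrite mulrS; lra.
Qed.

Lemma separated_spread (R : realDomainType) n (f : 'I_n.+2 -> R) (e : R) :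
  0 <= e -> (forall i j, i != j -> e < `|f i - f j|) ->
  exists i j, e *+ n.+1 < f j - f i.
Proof.
move=> e0 sep.
have sep_lt i j : f i < f j -> i != j -> f i + e < f j.
  by move=> ij /sep; rewrite distrC gtr0_norm ?subr_gt0 //; lra.
have f_inj : injective f.
  move=> i j fij; apply/eqP; apply: contraT => /sep.
  by rewrite fij subrr normr0; lra.
pose s := sort <=%R [seq f i | i <- enum 'I_n.+2].
have s_perm : perm_eq s [seq f i | i <- enum 'I_n.+2] by rewrite perm_sort.
have s_img y : y \in s -> exists i, y = f i.
  by rewrite (perm_mem s_perm) => /mapP [i _ ->]; exists i.
have s_lt : sorted <%R s.
  rewrite lt_sorted_uniq_le (perm_uniq s_perm) map_inj_uniq // enum_uniq.
  by rewrite sort_sorted //; apply: le_total.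
have s_size : size s = n.+2 by rewrite (perm_size s_perm) size_map size_enum_ord.
case: s s_perm s_img s_lt s_size => // x s _ s_img s_lt [s_size].
have s_gap : path (fun a b => a + e < b) x s.
  apply: (sub_in_path (P := mem (x :: s))) s_lt; last by apply/allP.
  move=> a b /s_img [i ->] /s_img [j ->] ij; apply: (sep_lt _ _ ij).
  by apply: contraTneq ij => ->; rewrite ltxx.
have [i xi] := s_img x (mem_head _ _).
have [j lj] := s_img _ (mem_last x s).
exists i, j; rewrite -xi -lj -s_size; apply: path_gap_spread s_gap _.
by rewrite -size_eq0 s_size.
Qed.

Lemma size_undup_map_iota (T : eqType) (f : nat -> T) a n :
  (size (undup [seq f k | k <- iota a n])
    <= (count (fun k => f k != f k.-1) (iota a.+1 n.-1)).+1)%N.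
Proof.
elim: n a => [//|[|n] IHn] a; first by [].
have := IHn a.+1; rewrite [iota a _]/= map_cons [n.+1.-1]/=.
set s := map f _ => IHs.
have undup_cons : (size (undup (f a :: s)) <= (f a \notin s) + size (undup s))%N.
  by rewrite /=; case: (f a \in s).
have new_value : (f a \notin s <= (f a.+1 != f a))%N.
  case: eqP => [<-|_]; last exact: leq_b1.
  by rewrite map_f // mem_iota; lia.
have count_cons : count (fun k => f k != f k.-1) (iota a.+1 n.+2.-1)
    = ((f a.+1 != f a) + count (fun k => f k != f k.-1) (iota a.+2 n))%N by [].
by rewrite count_cons; lia.
Qed.

(* In a frame where m = (rho, 0), with coordinates scaled by |m|, the two vectors
   are u = (x, A) and v = (y, -B). *)
Lemma cone_pair_infeasible (R : realFieldType) (A B rho x y : R) :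
  0 < A -> 0 < B -> 2 * x < rho -> 2 * y < rho -> 0 < x * B + y * A ->
  rho ^+ 2 < A ^+ 2 + x ^+ 2 -> rho ^+ 2 < B ^+ 2 + y ^+ 2 ->
  A ^+ 2 + x ^+ 2 <= (A - B) ^+ 2 + (rho - x - y) ^+ 2 ->
  B ^+ 2 + y ^+ 2 <= (A - B) ^+ 2 + (rho - x - y) ^+ 2 -> False.
Proof.
wlog x0 : A B x y / 0 <= x.
  move=> sym A0 B0 hx hy cone hA hB hAB hBA.
  have [x0|x_lt0] := lerP 0 x; first exact: (sym A B x y).
  have swap : (B - A) ^+ 2 + (rho - y - x) ^+ 2 = (A - B) ^+ 2 + (rho - x - y) ^+ 2.
    by ring.
  by apply: (sym B A y x); rewrite ?swap //; nra.
move=> A0 B0 hx hy cone hA hB hAB hBA.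
(* The last two hypotheses, with the norm bounds, force x + y < 0; the cone condition
   then gives A^2 < x (rho - x), contradicting rho^2 < A^2 + x^2. *)
have rho0 : 0 < rho by nra.
have gapB : (x + y) * (rho - y) < B * (B - A) by nra.
have gapA : (x + y) * (rho - x) < A * (A - B) by nra.
have weight0 : 0 < A * (rho - y) + B * (rho - x).
  by apply: addr_gt0; apply: mulr_gt0; lra.
have : (x + y) * (A * (rho - y) + B * (rho - x)) < 0 by nra.
rewrite pmulr_llt0 // => xy0.
have BA : A < B by nra.
have : A ^+ 2 < x * (rho - x) by nra.
nra.
Qed.

Section Angles.
Variable R : realType.
Implicit Types t : R.

Lemma cos_pithird : cos (pi / 3) = 2^-1 :> R.
Proof.
have pi0 := pi_gt0 R.
have c0 : 0 < cos (pi / 3 : R).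
  by apply: cos_gt0_pihalf; apply/andP; split; lra.
have : cos ((pi / 3) *+ 2) = - cos (pi / 3 : R).
  rewrite -(cosN (pi / 3)) -cosDpi; congr cos; rewrite mulr2n.
  by apply/eqP; rewrite -subr_eq0; apply/eqP; field.
rewrite cos_mulr2n; set c := cos (pi / 3) in c0 * => c2.
have : (2 * c - 1) * (c + 1) = (c ^+ 2 *+ 2 - 1) + c by rewrite mulr2n; ring.
rewrite c2 addNr => /eqP; rewrite mulf_eq0 => /orP [] /eqP; lra.
Qed.

Lemma cos_lt_half_bounds t : - (pi *+ 2) < t < pi *+ 2 -> cos t < 2^-1 ->
  pi / 3 < `|t| < pi * 5 / 3.
Proof.
move=> /andP [t1 t2]; rewrite -cos_norm -cos_pithird.
have pi0 := pi_gt0 R.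
have u2 : `|t| < pi *+ 2 by rewrite ltr_norml t1 t2.
have u0 : 0 <= `|t| by [].
have p3 : (pi / 3 : R) \in `[0, pi] by rewrite in_itv /=; apply/andP; split; lra.
case: (lerP `|t| pi) => hu.
  have uin : `|t| \in `[0, pi] by rewrite in_itv /= u0.
  by rewrite (ltr_cos p3 uin) => h; apply/andP; split; lra.
have vin : pi *+ 2 - `|t| \in `[0, pi] by rewrite in_itv /=; apply/andP; split; lra.
have -> : cos `|t| = cos (pi *+ 2 - `|t|).
  by rewrite -[RHS]cosN opprB -(cosD2pi (_ - _)) subrK.
by rewrite (ltr_cos p3 vin) => h; apply/andP; split; lra.
Qed.

Lemma cos_sin_surj (c s : R) : c ^+ 2 + s ^+ 2 = 1 ->
  exists t, [/\ 0 <= t < pi *+ 2, cos t = c & sin t = s].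
Proof.
move=> cs1; have pi0 := pi_gt0 R.
have c1 : -1 <= c <= 1 by apply/andP; split; nra.
have sin_acos_c : sin (acos c) = `|s|.
  by rewrite sin_acos // -sqrtr_sqr; congr Num.sqrt; lra.
have a0 := acos_ge0 c1; have api := acos_lepi c1.
have [s0|s0] := lerP 0 s.
  exists (acos c); split; first (apply/andP; split; lra).
    by rewrite acosK // in_itv.
  by rewrite sin_acos_c ger0_norm.
have c1' : -1 <= c < 1 by apply/andP; split; nra.
have := acos_gt0 c1' => a0'.
exists (pi *+ 2 - acos c); split; first (apply/andP; split; lra).
  by rewrite -[LHS]cosN opprB -(cosD2pi (_ - _)) subrK acosK // in_itv.
by rewrite addrC sinD2pi sinN sin_acos_c ltr0_norm ?opprK.
Qed.

Lemma sin_lt0_pi_2pi t : pi < t < pi *+ 2 -> sin t < 0.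
Proof.
move=> /andP [t1 t2]; rewrite -(subrK pi t) sinDpi oppr_lt0.
by apply: sin_gt0_pi; apply/andP; split; lra.
Qed.

End Angles.

Section EuclideanDot.
Variables (R : realType) (d : nat).
Implicit Types u v w : 'rV[R]_d.

Definition dot u v : R := \sum_(i < d) u ord0 i * v ord0 i.

Lemma dotC u v : dot u v = dot v u.
Proof. by apply: eq_bigr => i _; rewrite mulrC. Qed.

Lemma dotDl u v w : dot (u + v) w = dot u w + dot v w.
Proof. by rewrite /dot -big_split; apply: eq_bigr => i _; rewrite !mxE mulrDl. Qed.

Lemma dotZl (a : R) u w : dot (a *: u) w = a * dot u w.
Proof. by rewrite /dot mulr_sumr; apply: eq_bigr => i _; rewrite !mxE mulrA. Qed.

Lemma dotNl u w : dot (- u) w = - dot u w.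
Proof. by rewrite -scaleN1r dotZl mulN1r. Qed.

Lemma dotBl u v w : dot (u - v) w = dot u w - dot v w.
Proof. by rewrite dotDl dotNl. Qed.

Lemma dotDr u v w : dot w (u + v) = dot w u + dot w v.
Proof. by rewrite dotC dotDl !(dotC w). Qed.

Lemma dotZr (a : R) u w : dot w (a *: u) = a * dot w u.
Proof. by rewrite dotC dotZl dotC. Qed.

Lemma dotNr u w : dot w (- u) = - dot w u.
Proof. by rewrite dotC dotNl dotC. Qed.

Lemma dotBr u v w : dot w (u - v) = dot w u - dot w v.
Proof. by rewrite dotDr dotNr. Qed.

Lemma dotvv_ge0 u : 0 <= dot u u.
Proof. by apply: sumr_ge0 => i _; rewrite -expr2 sqr_ge0. Qed.

Lemma dotvv_eq0 u : dot u u = 0 -> u = 0.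
Proof.
move=> /psumr_eq0P u0; apply/rowP => i; rewrite !mxE.
by apply/eqP; rewrite -sqrf_eq0 expr2 u0 // => j _; rewrite -expr2 sqr_ge0.
Qed.

Lemma eucl_normE u : eucl_norm u = Num.sqrt (dot u u).
Proof. by congr Num.sqrt; apply: eq_bigr => i _; rewrite expr2. Qed.

Lemma eucl_norm_ge0 u : 0 <= eucl_norm u.
Proof. by rewrite eucl_normE sqrtr_ge0. Qed.

Lemma sqr_eucl_norm u : eucl_norm u ^+ 2 = dot u u.
Proof. by rewrite eucl_normE sqr_sqrtr // dotvv_ge0. Qed.

Lemma eucl_normN u : eucl_norm (- u) = eucl_norm u.
Proof. by rewrite !eucl_normE dotNl dotNr opprK. Qed.

Lemma eucl_normZ (a : R) u : eucl_norm (a *: u) = `|a| * eucl_norm u.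
Proof.
by rewrite !eucl_normE dotZl dotZr mulrA sqrtrM ?sqrtr_sqr // -expr2 sqr_ge0.
Qed.

Lemma eucl_norm0 : eucl_norm (0 : 'rV[R]_d) = 0.
Proof. by rewrite -(scale0r 0) eucl_normZ normr0 mul0r. Qed.

Lemma eucl_norm_eq0 u : eucl_norm u = 0 -> u = 0.
Proof. by move=> u0; apply: dotvv_eq0; rewrite -sqr_eucl_norm u0 expr0n. Qed.

Lemma eucl_norm_gt0 u : (0 < eucl_norm u) = (u != 0).
Proof.
rewrite lt_neqAle eucl_norm_ge0 andbT eq_sym; apply/idP/idP.
  by apply: contra => /eqP ->; rewrite eucl_norm0.
by apply: contra => /eqP/eucl_norm_eq0 ->.
Qed.

Lemma ltr_eucl_norm u v : (eucl_norm u < eucl_norm v) = (dot u u < dot v v).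
Proof. by rewrite -!sqr_eucl_norm ltr_pXn2r // nnegrE eucl_norm_ge0. Qed.

Lemma ler_eucl_norm u v : (eucl_norm u <= eucl_norm v) = (dot u u <= dot v v).
Proof. by rewrite -!sqr_eucl_norm ler_pXn2r // nnegrE eucl_norm_ge0. Qed.

End EuclideanDot.

Section PlaneFrame.
Variables (R : realType) (m : 'rV[R]_2).
Implicit Types u v : 'rV[R]_2.

Definition cross u v : R := u 0 0 * v 0 1 - u 0 1 * v 0 0.

Lemma dot_plane u v : dot u v = u 0 0 * v 0 0 + u 0 1 * v 0 1.
Proof.
rewrite /dot !big_ord_recl big_ord0 addr0.
by rewrite (_ : lift ord0 ord0 = 1) //; apply: val_inj.
Qed.

Lemma dot_frame u v : dot m m * dot u v = dot u m * dot v m + cross m u * cross m v.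
Proof. by rewrite !dot_plane /cross; ring. Qed.

Lemma cross_frame u v :
  dot m m * cross u v = dot u m * cross m v - cross m u * dot v m.
Proof. by rewrite !dot_plane /cross; ring. Qed.

Lemma crossD u v : cross m (u + v) = cross m u + cross m v.
Proof. by rewrite /cross !mxE; ring. Qed.

Lemma crossB u v : cross m (u - v) = cross m u - cross m v.
Proof. by rewrite /cross !mxE; ring. Qed.

Lemma crossvv : cross m m = 0.
Proof. by rewrite /cross mulrC subrr. Qed.

Hypothesis m0 : m != 0.

Lemma polar_frame u : u != 0 -> exists t, [/\ 0 <= t < pi *+ 2,
  cos t * (eucl_norm u * eucl_norm m) = dot u m &
  sin t * (eucl_norm u * eucl_norm m) = cross m u].
Proof.
move=> u0; set n := eucl_norm u * eucl_norm m.
have n0 : 0 < n by rewrite mulr_gt0 ?eucl_norm_gt0.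
have sq : dot u m ^+ 2 + cross m u ^+ 2 = n ^+ 2.
  by rewrite exprMn !sqr_eucl_norm !expr2 -dot_frame mulrC.
have unit : (dot u m / n) ^+ 2 + (cross m u / n) ^+ 2 = 1.
  by rewrite !expr_div_n -mulrDl sq divff // expf_neq0 // gt_eqF.
have [t [t_rng ct st]] := cos_sin_surj unit.
by exists t; rewrite ct st !divfK ?gt_eqF.
Qed.

Lemma polar_frame_dot u v tu tv :
  cos tu * (eucl_norm u * eucl_norm m) = dot u m ->
  sin tu * (eucl_norm u * eucl_norm m) = cross m u ->
  cos tv * (eucl_norm v * eucl_norm m) = dot v m ->
  sin tv * (eucl_norm v * eucl_norm m) = cross m v ->
  cos (tu - tv) * (eucl_norm u * eucl_norm v) = dot u v.
Proof.
move=> cu su cv sv; have nm0 : eucl_norm m != 0 by rewrite gt_eqF ?eucl_norm_gt0.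
apply: (mulfI (expf_neq0 2 nm0)).
by rewrite sqr_eucl_norm dot_frame -cu -su -cv -sv cosB -sqr_eucl_norm; ring.
Qed.

Lemma polar_frame_cross u v tu tv :
  cos tu * (eucl_norm u * eucl_norm m) = dot u m ->
  sin tu * (eucl_norm u * eucl_norm m) = cross m u ->
  cos tv * (eucl_norm v * eucl_norm m) = dot v m ->
  sin tv * (eucl_norm v * eucl_norm m) = cross m v ->
  sin (tv - tu) * (eucl_norm u * eucl_norm v) = cross u v.
Proof.
move=> cu su cv sv; have nm0 : eucl_norm m != 0 by rewrite gt_eqF ?eucl_norm_gt0.
apply: (mulfI (expf_neq0 2 nm0)).
by rewrite sqr_eucl_norm cross_frame -cu -su -cv -sv sinB -sqr_eucl_norm; ring.
Qed.

End PlaneFrame.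

Lemma plane_opposite_pair (R : realType) (m : 'rV[R]_2) (w : 'I_4 -> 'rV[R]_2) :
  m != 0 -> (forall i, w i != 0) ->
  (forall i, 2 * dot (w i) m < eucl_norm (w i) * eucl_norm m) ->
  (forall i j, i != j -> 2 * dot (w i) (w j) < eucl_norm (w i) * eucl_norm (w j)) ->
  exists a b, [/\ 0 < cross m (w a), cross m (w b) < 0 & cross (w a) (w b) < 0].
Proof.
move=> m0 w0 wm ww; have pi0 := pi_gt0 R.
have nw0 i : 0 < eucl_norm (w i) by rewrite eucl_norm_gt0.
have nwm0 i : 0 < eucl_norm (w i) * eucl_norm m by rewrite mulr_gt0 ?eucl_norm_gt0.
have /choice [t ht] := fun i => polar_frame m0 (w0 i).
have t_rng i : pi / 3 < t i < pi * 5 / 3.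
  have [/andP [t0 t2] ct _] := ht i.
  suff /cos_lt_half_bounds : cos (t i) < 2^-1 by rewrite ger0_norm //; apply; lra.
  by rewrite -(ltr_pM2r (nwm0 i)) ct; have := wm i; lra.
have t_sep i j : i != j -> pi / 3 < `|t i - t j|.
  move=> ij; have [_ ci si] := ht i; have [_ cj sj] := ht j.
  have /andP [ti1 ti2] := t_rng i; have /andP [tj1 tj2] := t_rng j.
  suff /andP [] : pi / 3 < `|t i - t j| < pi * 5 / 3 by [].
  apply: cos_lt_half_bounds; first by apply/andP; split; lra.
  rewrite -(ltr_pM2r (mulr_gt0 (nw0 i) (nw0 j))) (polar_frame_dot m0 ci si cj sj).
  by have := ww i j ij; lra.
have [a [b ab]] := separated_spread (ltW (divr_gt0 pi0 (ltr0n _ 3))) t_sep.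
have /andP [ta1 ta2] := t_rng a; have /andP [tb1 tb2] := t_rng b.
have [_ ca sa] := ht a; have [_ cb sb] := ht b.
exists a, b; split.
- by rewrite -sa mulr_gt0 //; apply: sin_gt0_pi; apply/andP; split; lra.
- by rewrite -sb pmulr_llt0 //; apply: sin_lt0_pi_2pi; apply/andP; split; lra.
rewrite -(polar_frame_cross m0 ca sa cb sb) pmulr_llt0 ?mulr_gt0 //.
by apply: sin_lt0_pi_2pi; apply/andP; split; lra.
Qed.

Lemma plane_four_infeasible (R : realType) (m : 'rV[R]_2) (w : 'I_4 -> 'rV[R]_2) :
  m != 0 -> (forall i, eucl_norm m < eucl_norm (w i)) ->
  (forall i, 2 * dot (w i) m < dot m m) ->
  (forall i j, i != j -> 2 * dot (w i) (w j) < eucl_norm (w i) * eucl_norm (w j)) ->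
  (forall i j, i != j -> eucl_norm (w i) < eucl_norm (w i + w j - m)) -> False.
Proof.
move=> m0 mw wm ww shift.
have nm0 : 0 < eucl_norm m by rewrite eucl_norm_gt0.
have w0 i : w i != 0 by rewrite -eucl_norm_gt0 (lt_trans nm0 (mw i)).
have wm_wide i : 2 * dot (w i) m < eucl_norm (w i) * eucl_norm m.
  apply: lt_trans (wm i) _; rewrite -sqr_eucl_norm expr2 ltr_pM2r //.
have [a [b [A0 Sb0 ab_cross]]] := plane_opposite_pair m0 w0 wm_wide ww.
have ab_neq : a != b by apply: contraTneq Sb0 => <-; rewrite -leNgt ltW.
have rho0 : 0 < dot m m by rewrite -sqr_eucl_norm exprn_gt0.
set x := dot (w a) m; set y := dot (w b) m.
set A := cross m (w a) in A0; set B := - cross m (w b).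
have B0 : 0 < B by rewrite oppr_gt0.
have cone : 0 < x * B + y * A.
  have : dot m m * cross (w a) (w b) < 0 by rewrite pmulr_rlt0.
  by rewrite cross_frame -/x -/y -/A /B; lra.
have frame u : dot m m * dot u u = dot u m ^+ 2 + cross m u ^+ 2.
  by rewrite dot_frame !expr2.
have frame_a : dot m m * dot (w a) (w a) = A ^+ 2 + x ^+ 2 by rewrite frame addrC.
have frame_b : dot m m * dot (w b) (w b) = B ^+ 2 + y ^+ 2.
  by rewrite frame addrC sqrrN.
have frame_ab : dot m m * dot (w a + w b - m) (w a + w b - m)
    = (A - B) ^+ 2 + (dot m m - x - y) ^+ 2.
  by rewrite frame dotBl dotDl crossB crossD crossvv -/x -/y -/A /B; ring.
apply: (cone_pair_infeasible A0 B0 (wm a) (wm b) cone).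
- by rewrite -frame_a expr2 ltr_pM2l // -ltr_eucl_norm.
- by rewrite -frame_b expr2 ltr_pM2l // -ltr_eucl_norm.
- by rewrite -frame_a -frame_ab ler_pM2l // -ler_eucl_norm ltW // shift.
- rewrite -frame_b -frame_ab ler_pM2l // -ler_eucl_norm ltW // (addrC (w a)).
  by rewrite shift // eq_sym.
Qed.

Section WideFamilies.
Variables (R : realType) (d : nat).
Implicit Types u v : 'rV[R]_d.

Lemma dot_lt_of_dist u v : eucl_norm u < eucl_norm (u - v) -> 2 * dot u v < dot v v.
Proof. by rewrite ltr_eucl_norm dotBl !dotBr (dotC v u); lra. Qed.

Lemma dot_lt_norms u v : eucl_norm u < eucl_norm (u - v) ->
  eucl_norm v < eucl_norm (u - v) -> 2 * dot u v < eucl_norm u * eucl_norm v.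
Proof.
move=> /dot_lt_of_dist uv; rewrite -(eucl_normN (u - v)) opprB => /dot_lt_of_dist.
rewrite dotC -!sqr_eucl_norm !expr2 in uv *.
have := eucl_norm_ge0 u; have := eucl_norm_ge0 v.
by case: (lerP (eucl_norm u) (eucl_norm v)) => ?; nra.
Qed.

Lemma kissing_config_of_wide r (V : 'I_r -> 'rV[R]_d) : (forall i, V i != 0) ->
  (forall i j, i != j -> 2 * dot (V i) (V j) <= eucl_norm (V i) * eucl_norm (V j)) ->
  kissing_config R d r.
Proof.
move=> V0 wide; have n0 i : 0 < eucl_norm (V i) by rewrite eucl_norm_gt0.
exists (fun i => (2 / eucl_norm (V i)) *: V i); split=> [i|i j ij].
  by rewrite eucl_normZ ger0_norm ?divfK ?gt_eqF ?divr_ge0 ?ltW.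
rewrite -(ler_pXn2r (n := 2)) ?nnegrE ?eucl_norm_ge0 // sqr_eucl_norm.
rewrite !dotBl !dotBr !dotZl !dotZr (dotC (V j)) -!sqr_eucl_norm.
have := wide i j ij; have := n0 i; have := n0 j.
set a := eucl_norm (V i); set b := eucl_norm (V j); set p := dot (V i) (V j) => b0 a0 ab.
have -> : 2 / a * (2 / a * a ^+ 2) - 2 / a * (2 / b * p) -
    (2 / b * (2 / a * p) - 2 / b * (2 / b * b ^+ 2)) = 8 - 8 * (p / (a * b)).
  by field; rewrite !gt_eqF.
have : p / (a * b) <= 2^-1 by rewrite ler_pdivrMr ?mulr_gt0 //; lra.
by rewrite expr2; lra.
Qed.

Definition short_separated r (c : R) (V : 'I_r -> 'rV[R]_d) :=
  (forall i, 0 < eucl_norm (V i) < c) /\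
  (forall i j, i != j -> c <= eucl_norm (V i - V j)).

Lemma short_separated_wide r c (V : 'I_r -> 'rV[R]_d) i j : short_separated c V ->
  i != j -> 2 * dot (V i) (V j) < eucl_norm (V i) * eucl_norm (V j).
Proof.
move=> [short sep] ij; have /andP [_ ci] := short i; have /andP [_ cj] := short j.
by apply: dot_lt_norms; apply: lt_le_trans (sep i j ij).
Qed.

Lemma short_separated_kissing r c (V : 'I_r -> 'rV[R]_d) :
  short_separated c V -> kissing_config R d r.
Proof.
move=> sepV; apply: (kissing_config_of_wide (V := V)) => [i|i j ij].
  by have /andP [Vi _] := sepV.1 i; rewrite -eucl_norm_gt0.
exact: ltW (short_separated_wide sepV ij).
Qed.

Definition shift_lengthens r (V : 'I_r -> 'rV[R]_d) :=
  forall i j k, eucl_norm (V j) < eucl_norm (V i) ->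
    eucl_norm (V k) < eucl_norm (V k - V j + V i).

End WideFamilies.

Lemma plane_family_le4 (R : realType) r c (V : 'I_r -> 'rV[R]_2) :
  short_separated c V -> injective (fun i => eucl_norm (V i)) -> shift_lengthens V ->
  (r <= 4)%N.
Proof.
move=> sepV norm_inj shiftV; rewrite leqNgt; apply/negP => r5.
have [short sep] := sepV.
have r0 : (0 < r)%N by lia.
have [m _ m_min] := arg_minP (fun i => eucl_norm (V i)) (i0 := Ordinal r0) (P := xpredT) isT.
have r4 : (4 <= r.-1)%N by lia.
pose idx (k : 'I_4) : 'I_r := lift m (widen_ord r4 k).
have idx_neq k : idx k != m by rewrite eq_sym neq_lift.
have idx_inj : injective idx by move=> a b /lift_inj/(congr1 val) ab; apply: val_inj.
have m_lt k : eucl_norm (V m) < eucl_norm (V (idx k)).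
  rewrite lt_neqAle m_min // andbT.
  by apply: contraNneq (idx_neq k) => /norm_inj ->.
apply: (plane_four_infeasible (m := V m) (w := fun k => V (idx k))) => [|//|k|a b ab|a b ab].
- by have /andP [] := short m; rewrite eucl_norm_gt0.
- apply: dot_lt_of_dist; have /andP [_ ck] := short (idx k).
  exact: lt_le_trans ck (sep _ _ (idx_neq k)).
- by apply: short_separated_wide sepV _; rewrite (inj_eq idx_inj).
- by rewrite addrAC; apply: shiftV.
Qed.

Local Open Scope classical_set_scope.

Section KroneckerDisplacements.
Variables (R : realType) (d : nat) (B : 'M[R]_d) (alpha : 'rV[R]_d).
Local Notation L := (lattice_of B).

Lemma lattice_ofN l : L l -> L (- l).
Proof.
case=> z ->; exists (fun i => - z i); rewrite -sumrN.
by apply: eq_bigr => i _; rewrite intrN scaleNr.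
Qed.

Lemma lattice_ofD l l' : L l -> L l' -> L (l + l').
Proof.
case=> z -> [z' ->]; exists (fun i => z i + z' i); rewrite -big_split.
by apply: eq_bigr => i _; rewrite intrD scalerDl.
Qed.

Definition in_coset (z : int) v := exists2 l, L l & v = z%:~R *: alpha + l.

Lemma in_cosetD z z' v v' : in_coset z v -> in_coset z' v' -> in_coset (z + z') (v + v').
Proof.
case=> l Ll -> [l' Ll' ->]; exists (l + l'); first exact: lattice_ofD.
by rewrite intrD scalerDl addrACA.
Qed.

Lemma in_cosetN z v : in_coset z v -> in_coset (- z) (- v).
Proof.
case=> l Ll ->; exists (- l); first exact: lattice_ofN.
by rewrite intrN scaleNr opprD.
Qed.

Lemma in_cosetB z z' v v' : in_coset z v -> in_coset z' v' -> in_coset (z - z') (v - v').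
Proof. by move=> cv cv'; apply/in_cosetD/in_cosetN. Qed.

Definition displacements (t : nat) : set R :=
  [set r | exists (j : nat) (l : 'rV[R]_d),
     [/\ (j <= t)%N, L l, r = eucl_norm (j%:R *: alpha + l) & 0 < r]].

Definition min_disp t := inf (displacements t).

Hypothesis L_nontrivial : exists2 l, L l & l != 0.

Lemma displacements_neq0 t : displacements t !=set0.
Proof.
case: L_nontrivial => l Ll l0; exists (eucl_norm l), 0%N, l.
by rewrite scale0r add0r eucl_norm_gt0.
Qed.

Lemma min_disp_le t r : displacements t r -> min_disp t <= r.
Proof. by apply: ge_inf; exists 0 => _ [j [l [_ _ -> /ltW]]]. Qed.

Lemma le_min_disp s t : (s <= t)%N -> min_disp t <= min_disp s.
Proof.
move=> st; apply: lb_le_inf (displacements_neq0 s) _ => _ [j [l [js Ll -> v0]]].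
by apply: min_disp_le; exists j, l; split => //; apply: leq_trans st.
Qed.

Lemma displacements_coset z v t : (`|z| <= t)%N -> in_coset z v -> 0 < eucl_norm v ->
  displacements t (eucl_norm v).
Proof.
move=> zt [l Ll ->]; case: z zt => n /= nt v0; first by exists n, l.
have e : eucl_norm ((Negz n)%:~R *: alpha + l) = eucl_norm (n.+1%:R *: alpha + - l).
  by rewrite -eucl_normN opprD NegzE intrN scaleNr opprK.
by exists n.+1, (- l); split => //; apply: lattice_ofN.
Qed.

Lemma min_disp_le_coset z v t : (`|z| <= t)%N -> in_coset z v -> v != 0 ->
  min_disp t <= eucl_norm v.
Proof.
by rewrite -eucl_norm_gt0 => zt cv v0; apply/min_disp_le/(displacements_coset zt).
Qed.

Lemma min_disp_drop k : (0 < k)%N -> min_disp k < min_disp k.-1 ->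
  exists2 v, in_coset k v & 0 < eucl_norm v < min_disp k.-1.
Proof.
move=> k0 /(inf_lt (displacements_neq0 k)) [_ [j [l [jk Ll -> v0]]] vk].
have [jk'|kj] := ltnP j k.
  have : min_disp k.-1 <= eucl_norm (j%:R *: alpha + l).
    by apply: min_disp_le; exists j, l; split => //; lia.
  by lra.
have jk_eq : j = k by lia.
by rewrite jk_eq in v0 vk; exists (k%:R *: alpha + l); [exists l | rewrite v0].
Qed.

Lemma nn_dist_min_disp N n : (1 <= n <= N)%N ->
  nn_dist L alpha N n = min_disp (maxn n.-1 (N - n)).
Proof.
move=> n_rng; congr inf; apply/seteqP; split => r.
  case=> m [l [m_rng Ll -> v0]]; apply: (displacements_coset (z := m%:Z - n%:Z)) => //.
    by lia.
  by exists l; rewrite // intrB.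
case=> j [l [jt Ll -> v0]].
have [jn|jn] := leqP j (N - n).
  exists (n + j)%N, l; split => //; first lia.
  by rewrite natrD addrAC subrr add0r.
exists (n - j)%N, (- l); split => //; [lia | exact: lattice_ofN |].
rewrite natrB; last lia.
by rewrite (_ : n%:R - j%:R - n%:R = - j%:R :> R) ?scaleNr -?opprD ?eucl_normN //; ring.
Qed.

Definition drop_vector (k : nat) v :=
  [/\ in_coset k v, 0 < eucl_norm v & eucl_norm v < min_disp k.-1].

Lemma drop_vector_exists k : (0 < k)%N -> min_disp k != min_disp k.-1 ->
  exists v, drop_vector k v.
Proof.
move=> k0 drop; have [|v cv /andP [v0 vk]] := min_disp_drop k0.
  by rewrite lt_neqAle drop le_min_disp // leq_pred.
by exists v.
Qed.

Lemma drop_vector_ge k v : drop_vector k v -> min_disp k <= eucl_norm v.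
Proof. by case=> cv v0 _; apply: min_disp_le_coset cv _; rewrite // -eucl_norm_gt0. Qed.

Lemma drop_vector_bounds t k v : (t <= k.-1)%N -> drop_vector k v ->
  0 < eucl_norm v < min_disp t.
Proof. by move=> tk [_ -> vk]; apply: lt_le_trans vk (le_min_disp tk). Qed.

Lemma drop_vector_decr k k' v v' : (k < k')%N ->
  drop_vector k v -> drop_vector k' v' -> eucl_norm v' < eucl_norm v.
Proof.
move=> kk' dv [_ _ vk']; apply: lt_le_trans vk' _.
by apply: le_trans (drop_vector_ge dv); apply: le_min_disp; lia.
Qed.

Lemma drop_vector_sep t k k' v v' : (k < k')%N -> (k' - k <= t)%N ->
  drop_vector k v -> drop_vector k' v' -> min_disp t <= eucl_norm (v' - v).
Proof.
move=> kk' kt dv dv'; apply: (min_disp_le_coset (z := k'%:Z - k%:Z)).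
- by lia.
- by apply: in_cosetB; [case: dv' | case: dv].
by rewrite subr_eq0; apply: contraTneq (drop_vector_decr kk' dv dv') => ->; rewrite ltxx.
Qed.

Lemma drop_vector_shift t k k' k'' v v' v'' :
  (k < k')%N -> (k' - k <= t)%N -> (t < k'')%N ->
  drop_vector k v -> drop_vector k' v' -> drop_vector k'' v'' ->
  eucl_norm v'' < eucl_norm (v'' - v' + v).
Proof.
move=> kk' kt tk'' dv dv' dv''.
have sep := drop_vector_sep kk' kt dv dv'.
have /andP [_ v''t] : 0 < eucl_norm v'' < min_disp t.
  by apply: drop_vector_bounds dv''; lia.
case: (dv'') => cv'' _ vk''; apply: lt_le_trans vk'' _.
apply: (min_disp_le_coset (z := k''%:Z - k'%:Z + k%:Z)).
- by lia.
- by apply: in_cosetD; [apply: in_cosetB cv'' _; case: dv' | case: dv].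
apply: contraTneq v''t => /eqP; rewrite -addrA addr_eq0 opprD opprK => /eqP ->.
by rewrite -leNgt.
Qed.

Definition drops N :=
  [seq k <- iota (N %/ 2).+1 (N - N %/ 2).-1 | min_disp k != min_disp k.-1].

Lemma gN_le_drops N : (gN L alpha N <= (size (drops N)).+1)%N.
Proof.
rewrite /drops size_filter.
apply: leq_trans (size_undup_map_iota min_disp (N %/ 2) (N - N %/ 2)).
apply: uniq_leq_size; first exact: undup_uniq.
move=> x; rewrite !mem_undup => /mapP [n]; rewrite mem_iota => n_rng ->.
by rewrite nn_dist_min_disp; [apply: map_f; rewrite mem_iota|]; lia.
Qed.

Lemma drop_vectors_family t (D : seq nat) : uniq D ->
  (forall k, k \in D -> [/\ (t < k)%N, (k <= 2 * t + 1)%N & exists v, drop_vector k v]) ->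
  exists V : 'I_(size D) -> 'rV[R]_d,
    [/\ short_separated (min_disp t) V, injective (fun i => eucl_norm (V i))
       & shift_lengthens V].
Proof.
move=> D_uniq D_drop.
have /choice [W W_drop] : forall k, exists v, k \in D -> drop_vector k v.
  move=> k; case kD: (k \in D); last by exists 0.
  by have [_ _ [v dv]] := D_drop k kD; exists v.
pose K (i : 'I_(size D)) := nth 0%N D i.
have KD i : K i \in D by apply: mem_nth.
have K_inj : injective K by move=> i j /eqP; rewrite nth_uniq // => /eqP /val_inj.
have K_rng i : (t < K i <= 2 * t + 1)%N by have [? ? _] := D_drop _ (KD i); lia.
pose V i := W (K i).
have dV i : drop_vector (K i) (V i) by apply: W_drop.
have ltK i j : (K i < K j)%N = (eucl_norm (V j) < eucl_norm (V i)).
  case: ltngtP => [ij|ji|/K_inj ->]; last by rewrite ltxx.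
    by rewrite (drop_vector_decr ij (dV i) (dV j)).
  by apply/esym/negbTE; rewrite -leNgt ltW // (drop_vector_decr ji (dV j) (dV i)).
exists V; split.
- split=> [i|i j ij]; first by apply: drop_vector_bounds (dV i); have := K_rng i; lia.
  wlog Kij : i j ij / (K i < K j)%N.
    move=> sep; case: (ltngtP (K i) (K j)) => [|Kji|/K_inj/eqP]; first exact: sep.
      by rewrite -eucl_normN opprB; apply: sep; rewrite // eq_sym.
    by rewrite (negbTE ij).
  rewrite -eucl_normN opprB; apply: drop_vector_sep Kij _ (dV i) (dV j).
  by have := K_rng i; have := K_rng j; lia.
- move=> i j /= eq_norm; apply: K_inj; apply/eqP.
  by rewrite eqn_leq leqNgt ltK eq_norm ltxx leqNgt ltK eq_norm ltxx.
- move=> i j k; rewrite -ltK => Kij.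
  apply: (drop_vector_shift (t := t)) Kij _ _ (dV i) (dV j) (dV k).
  + by have := K_rng i; have := K_rng j; lia.
  + by have := K_rng k; lia.
Qed.

Lemma drop_family N : exists r (V : 'I_r -> 'rV[R]_d),
  [/\ (gN L alpha N <= r.+1)%N, short_separated (min_disp (N %/ 2)%N) V,
      injective (fun i => eucl_norm (V i)) & shift_lengthens V].
Proof.
have [|k|V [sepV norm_inj shiftV]] := @drop_vectors_family (N %/ 2) (drops N).
- exact/filter_uniq/iota_uniq.
- rewrite mem_filter mem_iota => /andP [drop k_rng]; split; try lia.
  by apply: drop_vector_exists drop; lia.
by exists (size (drops N)), V; split => //; apply: gN_le_drops.
Qed.

End KroneckerDisplacements.

Lemma unimodular_lattice_nontrivial (R : realType) d (B : 'M[R]_d) :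
  (0 < d)%N -> unimodular_basis B -> exists2 l, lattice_of B l & l != 0.
Proof.
case: d B => // d B _ hB.
have [i Bi|all0] := pickP (fun i => row i B != 0).
  exists (row i B) => //; exists (fun j => (j == i)%:Z).
  rewrite (bigD1 i) //= eqxx scale1r big1 ?addr0 // => j /negbTE ->.
  by rewrite scale0r.
suff B0 : B = 0.
  by move: hB; rewrite /unimodular_basis B0 det0 normr0 => /eqP; rewrite eq_sym oner_eq0.
by apply/row_matrixP => i; rewrite row0; apply/eqP/negbFE/all0.
Qed.

Theorem theorem1p1 (R : realType) (d : nat) (hd : (2 <= d)%N)
  (B : 'M[R]_d) (hB : unimodular_basis B) (alpha : 'rV[R]_d) (N : nat) :
  (d = 2%N -> (gN (lattice_of B) alpha N <= 5)%N) /\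
  ((3 <= d)%N -> forall sigma : nat, is_kissing_number R d sigma ->
     (gN (lattice_of B) alpha N <= sigma.+1)%N).
Proof.
have L_nontrivial := unimodular_lattice_nontrivial (ltnW hd) hB.
have [r [V [gN_le sepV norm_inj shiftV]]] := drop_family alpha L_nontrivial N.
split=> [d2 | _ sigma [_ kissing_max]].
  by subst d; have := plane_family_le4 sepV norm_inj shiftV; lia.
by have := kissing_max r (short_separated_kissing sepV); lia.
Qed.
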